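(* Let $S>0$, let $D$ be a finite multiset of items with sizes in $(0,S]$, let $k\ge1$ be an integer and $\epsilon\in(0,1/2]$. Consider the following algorithm. (1) Let $I$ be the items of $D$ of size at most $\epsilon S$ and $J$ the items of size larger than $\epsilon S$. (2) Sort $J$ in non-decreasing order of size and partition it into consecutive groups of $g=\max\{1,\lfloor n(J)\epsilon^2\rfloor\}$ items (the last group possibly smaller), where $n(J)$ is the number of items of $J$; let $U$ be the instance obtained by rounding the size of every item up to the maximum size in its group. (3) Compute an optimal $k$-times bin packing of $U$ (i.e. of $U_k$), e.g. by optimally solving its configuration integer program. (4) Replace every copy of a rounded item by the corresponding copy of its original item, obtaining a $k$-times bin packing of $J$. (5) Insert the $k$ copies of each item of $I$ one at a time, each into some existing bin in which it fits (total size at most $S$) and which contains no copy of the same item, opening a new bin only if no such bin exists. Then the number $bins(D_k)$ of bins produced satisfies $$bins(D_k)\le(1+2\epsilon)\,OPT(D_k)+k.$$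
   Context: For a multiset $D$ of items with sizes in $(0,S]$ and an integer $k\ge1$, $D_k$ denotes the collection of $k$ copies of each item of $D$. A $k$-times bin packing of $D$ is an assignment of all copies in $D_k$ to bins such that each bin has total size at most $S$ and no bin contains two copies of the same item; $OPT(D_k)$ is the minimum number of bins in such a packing. *)

From HB Require Import structures.
From mathcomp Require Import all_boot all_order all_algebra.
Set Implicit Arguments. Unset Strict Implicit. Unset Printing Implicit Defensive.
Import Order.TTheory GRing.Theory Num.Theory.
Local Open Scope ring_scope.

Section KPack.
Variables (R : archiRealFieldType) (T : finType).

(* total size of a bin (a bin contains at most one copy of each item, so it
   is represented by the set of items having a copy in it) *)
Definition load (w : T -> R) (B : {set T}) : R := \sum_(i in B) w i.

(* P is a k-times bin packing of the items A (sizes w, bin capacity S):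
   a list of bins, each a set of items of A of total size <= S, such that
   each item of A lies in exactly k bins (= its k copies, pairwise in
   different bins). *)
Definition kpacking (A : {set T}) (w : T -> R) (S : R) (k : nat)
    (P : seq {set T}) : Prop :=
  (forall B, B \in P -> B \subset A) /\
  (forall B, B \in P -> load w B <= S) /\
  (forall i, i \in A -> count (fun B : {set T} => i \in B) P = k).

Definition opt_kpacking A w S k P : Prop :=
  kpacking A w S k P /\ forall Q, kpacking A w S k Q -> (size P <= size Q)%N.

Definition smallI (s : T -> R) (S eps : R) : {set T} := [set i | s i <= eps * S].
Definition largeJ (s : T -> R) (S eps : R) : {set T} := [set i | eps * S < s i].

Definition gsize (nJ : nat) (eps : R) : nat := maxn 1 (Num.truncn (nJ%:R * eps ^+ 2)).

(* rounded sizes: ordJ is J sorted by size; position p lies in group p %/ g;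
   each item gets the maximum size in its group *)
Definition rounded (s : T -> R) (g : nat) (ordJ : seq T) (i : T) : R :=
  \big[Num.max/0]_(j <- ordJ | (index j ordJ %/ g == index i ordJ %/ g)%N) s j.

Inductive insert_step (s : T -> R) (S : R) :
    seq {set T} -> T -> seq {set T} -> Prop :=
| InsOld bins i j : (j < size bins)%N -> i \notin nth set0 bins j ->
    load s (nth set0 bins j) + s i <= S ->
    insert_step s S bins i (set_nth set0 bins j (i |: nth set0 bins j))
| InsNew bins i :
    (forall j, (j < size bins)%N -> i \notin nth set0 bins j ->
       S < load s (nth set0 bins j) + s i) ->
    insert_step s S bins i (rcons bins [set i]).

Inductive insert_run (s : T -> R) (S : R) :
    seq {set T} -> seq T -> seq {set T} -> Prop :=
| RunNil bins : insert_run s S bins [::] bins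
| RunCons bins i xs bins' bins'' : insert_step s S bins i bins' ->
    insert_run s S bins' xs bins'' -> insert_run s S bins (i :: xs) bins''.

End KPack.

From HB Require Import structures.
From mathcomp Require Import all_boot all_order all_algebra.
From mathcomp Require Import lra zify.
Import Order.TTheory GRing.Theory Num.Theory.
Local Open Scope ring_scope.
Set Implicit Arguments. Unset Strict Implicit. Unset Printing Implicit Defensive.

(* Two lower bounds on OPT(D_k) drive the proof.  Linear grouping: in a k-times
   packing of D_k, put each large item where the item g positions later in the
   sorted order J sits; that item's size dominates the rounded one, so adding k
   singleton bins for each of the last g items gives a k-times packing of U_k.
   Hence OPT(U_k) <= OPT(D_k) + k g, with g <= 1 + n(J) eps^2 and
   k n(J) eps S <= k s(D) <= OPT(D_k) S.  Insertion: if a copy of a small item i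
   opens a new bin, the at least bins - k existing bins lacking i are each filled
   beyond (1 - eps) S, so (bins - k)(1 - eps) S <= k s(D) <= OPT(D_k) S. *)

Lemma count_flatten_nseq (T U : Type) (a : pred T) (k : nat) (f : U -> T) (l : seq U) :
  count a (flatten [seq nseq k (f x) | x <- l]) = (k * count (a \o f) l)%N.
Proof. by elim: l => [|x l IH] /=; rewrite ?muln0 // count_cat count_nseq IH mulnDr mulnC. Qed.

Lemma mem_drop_uniq (T : eqType) (s : seq T) (m : nat) (x : T) : uniq s ->
  (x \in drop m s) = (x \in s) && (m <= index x s)%N.
Proof.
move=> s_uniq; have [x_s|x_s] /= := boolP (x \in s); last first.
  by apply/negbTE; apply: contra x_s; apply: mem_drop.
have := count_uniq_mem x s_uniq; rewrite -[in count _ s](cat_take_drop m s) count_cat.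
rewrite !count_uniq_mem ?take_uniq ?drop_uniq // in_take // x_s.
by case: ltnP; case: (x \in drop m s).
Qed.

Section TotalLoad.
Variables (R : archiRealFieldType) (T : finType) (w : T -> R).

Definition copies (i : T) (bins : seq {set T}) : nat :=
  count (fun B : {set T} => i \in B) bins.

Definition total_load (bins : seq {set T}) : R := \sum_(B <- bins) load w B.

Lemma total_loadE bins : total_load bins = \sum_i w i * (copies i bins)%:R.
Proof.
elim: bins => [|B bins IH]; rewrite /total_load /copies.
  by rewrite big_nil big1 // => i _; rewrite mulr0.
rewrite big_cons -/(total_load bins) IH /load.
under [RHS]eq_bigr do rewrite /= natrD mulrDr.
rewrite big_split /= big_mkcond; congr (_ + _); apply: eq_bigr => i _.
by case: (i \in B); rewrite ?mulr1 ?mulr0.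
Qed.

Lemma total_load_le_copies bins bins' : (forall i, 0 <= w i) ->
  (forall i, copies i bins <= copies i bins')%N -> total_load bins <= total_load bins'.
Proof.
move=> w_ge0 le_copies; rewrite !total_loadE; apply: ler_sum => i _.
by apply: ler_wpM2l; rewrite ?ler_nat.
Qed.

Lemma total_load_le_size (S : R) bins : (forall B, B \in bins -> load w B <= S) ->
  total_load bins <= (size bins)%:R * S.
Proof.
move=> le_S; have -> : (size bins)%:R * S = \sum_(B <- bins) S.
  by rewrite big_const_seq count_predT iter_addr_0 mulr_natl.
by rewrite /total_load big_seq [leRHS]big_seq; apply: ler_sum.
Qed.

Lemma load_subset (A B : {set T}) : (forall i, 0 <= w i) -> A \subset B ->
  load w A <= load w B.
Proof.
move=> w_ge0 /subsetP sAB; rewrite /load [leRHS]big_mkcond [leLHS]big_mkcond /=.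
apply: ler_sum => i _; case: ifP => [/sAB -> //|_]; by case: ifP.
Qed.

Lemma total_load_ge_count (a : pred {set T}) (c : R) bins : (forall i, 0 <= w i) ->
  (forall B, B \in bins -> a B -> c <= load w B) ->
  (count a bins)%:R * c <= total_load bins.
Proof.
move=> w_ge0; elim: bins => [|B bins IH] le_c; first by rewrite mul0r /total_load big_nil.
rewrite /total_load big_cons -/(total_load bins) /= natrD mulrDl.
apply: lerD; last by apply: IH => B' B'_bins; apply: le_c; rewrite inE B'_bins orbT.
case: (a B) (le_c B (mem_head _ _)) => [/(_ isT)|_]; rewrite ?mul1r // mul0r.
exact: sumr_ge0.
Qed.

Lemma copies_kpacking (A : {set T}) (S : R) (k : nat) Q i : kpacking A w S k Q ->
  copies i Q = (k * (i \in A))%N.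
Proof.
case=> Q_sub [_ Q_copies]; have [i_A|i_A] := boolP (i \in A).
  by rewrite muln1; apply: Q_copies.
rewrite muln0; apply/eqP; rewrite -leqn0 leqNgt -has_count; apply/hasPn => B B_Q.
by apply: contra i_A; apply/subsetP/Q_sub.
Qed.

Lemma kpacking_volume (A : {set T}) (S : R) (k : nat) Q : kpacking A w S k Q ->
  k%:R * load w A <= (size Q)%:R * S.
Proof.
move=> Q_pack; have [_ [Q_le _]] := Q_pack.
apply: le_trans (total_load_le_size Q_le); rewrite total_loadE /load mulr_sumr.
rewrite [leLHS]big_mkcond; apply: ler_sum => i _.
rewrite (copies_kpacking _ Q_pack) mulrC.
by case: (i \in A); rewrite ?muln1 ?muln0 ?mulr0.
Qed.

Lemma total_load_le_kpacking (S : R) (k : nat) Q bins : kpacking setT w S k Q ->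
  (forall i, copies i bins = k) -> total_load bins <= (size Q)%:R * S.
Proof.
move=> Q_pack bins_copies; have [_ [Q_le _]] := Q_pack.
suff -> : total_load bins = total_load Q by apply: total_load_le_size.
rewrite !total_loadE; apply: eq_bigr => i _.
by rewrite bins_copies (copies_kpacking _ Q_pack) in_setT muln1.
Qed.

End TotalLoad.

Section Insertion.
Variables (R : archiRealFieldType) (T : finType) (s : T -> R) (S : R).

Lemma insert_step_copies bins i bins' j : insert_step s S bins i bins' ->
  copies j bins' = (copies j bins + (i == j))%N.
Proof.
case=> {bins i bins'} [bins i l l_lt i_notin _ | bins i _]; rewrite /copies.
  rewrite count_set_nth_ltn // in_setU1 (eq_sym j).
  case: (eqVneq i j) => [<-|_] /=; first by rewrite (negbTE i_notin) subn0.
  by rewrite addn0 addnK.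
by rewrite -cats1 count_cat /= in_set1 addn0 eq_sym.
Qed.

Lemma insert_run_copies bins xs final j : insert_run s S bins xs final ->
  copies j final = (copies j bins + count_mem j xs)%N.
Proof.
elim=> {bins xs final} [bins|bins i xs bins' final step _ ->]; first by rewrite addn0.
by rewrite (insert_step_copies _ step) /= addnA.
Qed.

Variables (k : nat) (c : R).
Hypotheses (s_ge0 : forall i, 0 <= s i) (c_ge0 : 0 <= c).

Lemma insert_step_size bins i bins' : insert_step s S bins i bins' ->
  (copies i bins < k)%N -> s i <= S - c ->
  size bins' = size bins \/ (size bins' - k)%:R * c <= total_load s bins'.
Proof.
case=> {bins i bins'} [bins i l l_lt _ _ | bins i no_room] lt_k i_small.
  by left; rewrite size_set_nth; apply/maxn_idPr.
right; rewrite size_rcons.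
have lacking : ((size bins).+1 - k <= count (fun B : {set T} => i \notin B) bins)%N.
  have := count_predC (fun B : {set T} => i \in B) bins; rewrite /copies in lt_k.
  by rewrite (@eq_count _ (predC _) (fun B : {set T} => i \notin B)) //; lia.
apply: le_trans (_ : (count (fun B : {set T} => i \notin B) bins)%:R * c <= _).
  by apply: ler_wpM2r; rewrite ?ler_nat.
apply: le_trans (_ : total_load s bins <= _); last first.
  by rewrite /total_load -cats1 big_cat big_seq1 /= lerDl; apply: sumr_ge0.
apply: total_load_ge_count => // B B_bins i_notin.
have := no_room (index B bins); rewrite index_mem B_bins nth_index // => /(_ isT i_notin).
lra.
Qed.

Lemma insert_run_size bins xs final : insert_run s S bins xs final ->
  (forall i, i \in xs -> s i <= S - c) ->
  (forall i, copies i bins + count_mem i xs <= k)%N ->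
  size final = size bins \/ (size final - k)%:R * c <= total_load s final.
Proof.
elim=> {bins xs final} [bins|bins i xs bins' final step run IH] small room; first by left.
have room' j : (copies j bins' + count_mem j xs <= k)%N.
  by have := room j; rewrite (insert_step_copies _ step) /= addnA.
have small' j : j \in xs -> s j <= S - c by move=> j_xs; apply: small; rewrite inE j_xs orbT.
have [size_final|] := IH small' room'; last by right.
have lt_k : (copies i bins < k)%N by have := room i; rewrite /= eqxx; lia.
rewrite size_final; case: (insert_step_size step lt_k (small i (mem_head _ _))) => [->|grown].
  by left.
right; apply: le_trans grown (total_load_le_copies _ _) => // j.
by rewrite (insert_run_copies _ run) leq_addr.
Qed.

End Insertion.

Section LinearGrouping.
Variables (R : archiRealFieldType) (T : finType) (s : T -> R) (S : R) (k g : nat).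
Variables (J : {set T}) (ordJ : seq T).
Hypotheses (g_gt0 : (0 < g)%N) (s_ge0 : forall i, 0 <= s i) (s_le_S : forall i, s i <= S).
Hypotheses (ordJ_J : perm_eq ordJ (enum J)) (ordJ_sorted : sorted (fun i j => s i <= s j) ordJ).

Let ordJ_uniq : uniq ordJ.
Proof. by rewrite (perm_uniq ordJ_J) enum_uniq. Qed.

Let mem_ordJ i : (i \in ordJ) = (i \in J).
Proof. by rewrite (perm_mem ordJ_J) mem_enum. Qed.

Let shiftable_mem i : (index i ordJ + g < size ordJ)%N -> i \in J.
Proof. by rewrite -mem_ordJ -index_mem; apply: leq_ltn_trans; rewrite leq_addr. Qed.

Definition shift_item (i : T) : T := nth i ordJ (index i ordJ + g).

Definition shift_bin (B : {set T}) : {set T} :=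
  [set i | (index i ordJ + g < size ordJ)%N && (shift_item i \in B)].

Definition tail_bins : seq {set T} :=
  flatten [seq nseq k [set x] | x <- drop (size ordJ - g) ordJ].

Lemma index_shift_item i : (index i ordJ + g < size ordJ)%N ->
  index (shift_item i) ordJ = (index i ordJ + g)%N.
Proof. by move=> i_lt; apply: index_uniq. Qed.

Lemma rounded_le_shift i : (index i ordJ + g < size ordJ)%N ->
  rounded s g ordJ i <= s (shift_item i).
Proof.
move=> i_lt; rewrite /rounded big_seq_cond; elim/big_ind: _ => //.
  by move=> x y x_le y_le; rewrite ge_max x_le y_le.
move=> j /andP[j_J /eqP same_group]; rewrite -(nth_index i j_J).
have le_trans_s : transitive (fun i j : T => s i <= s j).
  by move=> a b c; apply: le_trans.
apply: (sorted_leq_nth le_trans_s (fun a => lexx (s a)) i ordJ_sorted); rewrite ?inE //.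
  by rewrite index_mem.
have := leq_trunc_div (index i ordJ) g; have := ltn_ceil (index j ordJ) g_gt0.
rewrite same_group; lia.
Qed.

Lemma rounded_le_cap i : rounded s g ordJ i <= S.
Proof.
rewrite /rounded; elim/big_ind: _ => [|x y x_le y_le|j _].
- exact: le_trans (s_ge0 i) (s_le_S i).
- by rewrite ge_max x_le y_le.
- exact: s_le_S.
Qed.

Lemma shift_bin_sub B : shift_bin B \subset J.
Proof.
by apply/subsetP => i; rewrite inE => /andP[/shiftable_mem].
Qed.

Lemma load_shift_bin B : load (rounded s g ordJ) (shift_bin B) <= load s B.
Proof.
apply: le_trans (_ : \sum_(i in shift_bin B) s (shift_item i) <= _).
  by apply: ler_sum => i; rewrite inE => /andP[i_lt _]; apply: rounded_le_shift.
rewrite -big_imset /=.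
  apply: load_subset => //; apply/subsetP => j /imsetP[i].
  by rewrite inE => /andP[_ shift_B] ->.
move=> i i'; rewrite !inE => /andP[i_lt _] /andP[i'_lt _] eq_shift.
have i_J : i \in ordJ by rewrite mem_ordJ shiftable_mem.
have i'_J : i' \in ordJ by rewrite mem_ordJ shiftable_mem.
apply: (index_inj i i_J i'_J); apply/(@addIn g).
by rewrite -(index_shift_item i_lt) -(index_shift_item i'_lt) eq_shift.
Qed.

Lemma copies_map_shift_bin Q i :
  copies i (map shift_bin Q) =
  if (index i ordJ + g < size ordJ)%N then copies (shift_item i) Q else 0%N.
Proof.
rewrite /copies count_map; case: ifP => i_lt.
  by apply: eq_count => B; rewrite /= inE i_lt.
by rewrite (eq_count (a2 := pred0)) ?count_pred0 // => B; rewrite /= inE i_lt.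
Qed.

Lemma copies_tail_bins i :
  copies i tail_bins = (k * ((i \in J) && (size ordJ <= index i ordJ + g)))%N.
Proof.
rewrite /copies count_flatten_nseq.
rewrite (eq_count (a2 := pred1 i)) => [|x]; last by rewrite /= in_set1 eq_sym.
by rewrite count_uniq_mem ?drop_uniq // mem_drop_uniq // mem_ordJ leq_subLR addnC.
Qed.

Lemma kpacking_shifted A Q : kpacking A s S k Q -> J \subset A ->
  kpacking J (rounded s g ordJ) S k (map shift_bin Q ++ tail_bins).
Proof.
move=> Q_pack sJA; have [_ [Q_le _]] := Q_pack; split; [|split].
- move=> B; rewrite mem_cat => /orP[/mapP[B' _ ->]|/flatten_mapP[x x_tail]].
    exact: shift_bin_sub.
  by rewrite mem_nseq => /andP[_ /eqP ->]; rewrite sub1set -mem_ordJ (mem_drop x_tail).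
- move=> B; rewrite mem_cat => /orP[/mapP[B' B'_Q ->]|/flatten_mapP[x _]].
    exact: le_trans (load_shift_bin _) (Q_le _ B'_Q).
  by rewrite mem_nseq => /andP[_ /eqP ->]; rewrite /load big_set1 rounded_le_cap.
move=> i i_J; rewrite count_cat -/(copies i _) -/(copies i _).
rewrite copies_map_shift_bin copies_tail_bins i_J /=; case: ltnP => [i_lt|i_ge].
  have shift_J : shift_item i \in J by rewrite -mem_ordJ -index_mem index_shift_item.
  by rewrite (copies_kpacking _ Q_pack) (subsetP sJA _ shift_J) muln1 muln0 addn0.
by rewrite muln1.
Qed.

Lemma size_shifted Q : (size (map shift_bin Q ++ tail_bins) <= size Q + k * g)%N.
Proof.
rewrite size_cat size_map leq_add2l -count_predT count_flatten_nseq.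
by rewrite count_predT size_drop leq_mul2l; apply/orP; right; lia.
Qed.

Lemma opt_rounded_le A Q P : kpacking A s S k Q -> J \subset A ->
  opt_kpacking J (rounded s g ordJ) S k P -> (size P <= size Q + k * g)%N.
Proof.
move=> Q_pack sJA [_ P_min].
exact: leq_trans (P_min _ (kpacking_shifted Q_pack sJA)) (size_shifted Q).
Qed.

End LinearGrouping.

Lemma gsize_le (R : archiRealFieldType) (nJ : nat) (eps : R) :
  (gsize nJ eps)%:R <= 1 + nJ%:R * eps ^+ 2.
Proof.
rewrite /gsize; set t := Num.truncn _.
have t_le : t%:R <= nJ%:R * eps ^+ 2 by rewrite truncn_le mulr_ge0 ?sqr_ge0.
apply: le_trans (_ : (1 + t)%:R <= _); last by rewrite natrD lerD2l.
by rewrite ler_nat geq_max leq_addr leq_addl.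
Qed.

Lemma large_items_volume (R : archiRealFieldType) (T : finType) (s : T -> R)
    (S eps : R) (k : nat) Q :
  0 < S -> (forall i, 0 <= s i) -> kpacking setT s S k Q ->
  k%:R * (#|largeJ s S eps|%:R * eps) <= (size Q)%:R.
Proof.
move=> S_gt0 s_ge0 Q_pack; rewrite -(ler_pM2r S_gt0).
apply: le_trans (kpacking_volume Q_pack); rewrite -!mulrA ler_wpM2l //.
apply: le_trans (load_subset s_ge0 (subsetT (largeJ s S eps))).
rewrite mulrA mulr_natl -sumr_const mulr_suml /load; apply: ler_sum => i.
by rewrite inE => /ltW.
Qed.

Lemma ler_one_add_twice_of_mul_one_sub (R : realFieldType) (a q eps : R) :
  0 <= a -> 0 <= eps <= 1 / 2 -> a * (1 - eps) <= q -> a <= (1 + 2 * eps) * q.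
Proof.
move=> a_ge0 /andP[eps_ge0 eps_le] le_q.
have : (1 + 2 * eps) * (a * (1 - eps)) <= (1 + 2 * eps) * q.
  by rewrite ler_wpM2l //; lra.
have : 0 <= eps * (1 - 2 * eps) * a by rewrite !mulr_ge0 //; lra.
nra.
Qed.

Lemma size_opt_rounded_le (R : archiRealFieldType) (T : finType) (s : T -> R)
    (S eps : R) (k : nat) (ordJ : seq T) P Q :
  0 < S -> (forall i, 0 <= s i) -> (forall i, s i <= S) -> 0 <= eps ->
  perm_eq ordJ (enum (largeJ s S eps)) -> sorted (fun i j => s i <= s j) ordJ ->
  opt_kpacking (largeJ s S eps) (rounded s (gsize #|largeJ s S eps| eps) ordJ) S k P ->
  kpacking setT s S k Q ->
  (size P)%:R <= (1 + eps) * (size Q)%:R + k%:R.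
Proof.
move=> S_gt0 s_ge0 s_le_S eps_ge0 ordJ_J ordJ_sorted P_opt Q_pack.
have g_gt0 : (0 < gsize #|largeJ s S eps| eps)%N by rewrite leq_max.
have := opt_rounded_le g_gt0 s_ge0 s_le_S ordJ_J ordJ_sorted Q_pack (subsetT _) P_opt.
rewrite -(ler_nat R) natrD natrM => /le_trans; apply.
have := ler_wpM2l (ler0n R k) (gsize_le #|largeJ s S eps| eps).
have := ler_wpM2l eps_ge0 (large_items_volume eps S_gt0 s_ge0 Q_pack).
nra.
Qed.

Theorem theorem4 (R : archiRealFieldType) (n : nat) (s : 'I_n -> R)
    (S eps : R) (k : nat)
    (ordJ : seq 'I_n) (P : seq {set 'I_n}) (ordI : seq 'I_n)
    (final : seq {set 'I_n}) :
  0 < S ->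
  (forall i, 0 < s i <= S) ->
  (0 < k)%N ->
  0 < eps <= 1 / 2 ->
  (* step 2: J sorted non-decreasingly by size *)
  perm_eq ordJ (enum (largeJ s S eps)) ->
  sorted (fun i j => s i <= s j) ordJ ->
  (* step 3: an optimal k-times packing of the rounded instance U;
     step 4: the same bins, now holding the original items of J *)
  opt_kpacking (largeJ s S eps)
    (rounded s (gsize #|largeJ s S eps| eps) ordJ) S k P ->
  (* step 5: the k copies of each small item, items in some order *)
  perm_eq ordI (enum (smallI s S eps)) ->
  insert_run s S P (flatten [seq nseq k i | i <- ordI]) final ->
  (* bins(D_k) <= (1 + 2 eps) OPT(D_k) + k *)
  forall Q : seq {set 'I_n}, kpacking [set: 'I_n] s S k Q ->
    (size final)%:R <= (1 + 2 * eps) * (size Q)%:R + k%:R.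
Proof.
move=> S_gt0 s_range _ /andP[eps_gt0 eps_le] ordJ_J ordJ_sorted P_opt ordI_I run Q Q_pack.
have s_ge0 i : 0 <= s i by case/andP: (s_range i) => /ltW.
have s_le_S i : s i <= S by case/andP: (s_range i).
set xs := flatten _ in run.
have xs_copies i : count_mem i xs = (k * (i \in smallI s S eps))%N.
  rewrite (count_flatten_nseq _ _ id) count_uniq_mem ?(perm_mem ordI_I) ?mem_enum //.
  by rewrite (perm_uniq ordI_I) enum_uniq.
have all_copies i : (copies i P + count_mem i xs = k)%N.
  rewrite (copies_kpacking _ (proj1 P_opt)) xs_copies -mulnDr !inE ltNge.
  by case: (s i <= eps * S); rewrite muln1.
have final_copies i : copies i final = k by rewrite (insert_run_copies _ run) all_copies.
have xs_small i : i \in xs -> s i <= S - (1 - eps) * S.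
  move=> i_xs; have : i \in smallI s S eps.
    apply: contraLR i_xs => i_large.
    by rewrite -has_pred1 has_count xs_copies (negbTE i_large) muln0.
  by rewrite inE; lra.
have slack_ge0 : 0 <= (1 - eps) * S by rewrite mulr_ge0 ?ltW //; lra.
have [same_size|grown] :=
  insert_run_size s_ge0 slack_ge0 run xs_small (fun i => eq_leq (all_copies i)).
  rewrite same_size; apply: le_trans (size_opt_rounded_le S_gt0 s_ge0 s_le_S (ltW eps_gt0)
    ordJ_J ordJ_sorted P_opt Q_pack) _.
  by rewrite lerD2r ler_wpM2r //; lra.
have := le_trans grown (total_load_le_kpacking Q_pack final_copies).
rewrite mulrA ler_pM2r // => /ler_one_add_twice_of_mul_one_sub grown_le.
have : (size final)%:R <= (size final - k)%:R + k%:R :> R by rewrite -natrD ler_nat; lia.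
by move/le_trans; apply; rewrite lerD2r grown_le ?ler0n ?(ltW eps_gt0).
Qed.
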